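(* Let $A\subseteq\Gamma$ be a finite set. If $\mathsf{E}_3(A)\ge2|A|^3$ then, for each choice of sign, $$\Big(\max_{s\ne0}|A\pm A_s|\Big)^3\gg\frac{|A|^{10}}{|A-A|\,\mathsf{E}^2(A)}.$$ Now let $\beta,\gamma\in[0,1]$ with $\beta\le1/2$, suppose $A$ is $(3,\beta,\gamma)$-connected and $\mathsf{E}_3(A)\ge2^4\gamma^{-1}|A|^3$. Then, for each choice of sign, $$\Big(\max_{s\ne0}|A\pm A_s|\Big)^2\gg\gamma\frac{|A|^5}{\mathsf{E}(A)}.$$
   Context: $\Gamma$ is an abelian group. $A_s=A\cap(A-s)$. $\mathsf{E}_k(A)=\sum_s|A_s|^k$ for real $k\ge1$, $\mathsf{E}(A)=\mathsf{E}_2(A)$. For real $\alpha>1$, $A$ is $(\alpha,\beta,\gamma)$-connected if every $B\subseteq A$ with $|B|\ge\beta|A|$ satisfies $\mathsf{E}_\alpha(B)\ge\gamma(|B|/|A|)^{2\alpha}\mathsf{E}_\alpha(A)$. $\ll,\gg$ hide absolute constants. *)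

From HB Require Import structures.
From mathcomp Require Import all_boot all_order all_algebra.
From mathcomp Require Import finmap.
Set Implicit Arguments. Unset Strict Implicit. Unset Printing Implicit Defensive.
Import Order.TTheory GRing.Theory Num.Theory.
Local Open Scope fset_scope.
Local Open Scope ring_scope.

Section Defs.
Variable G : zmodType.

Definition sumset (A B : {fset G}) : {fset G} := [fset a + b | a in A, b in B].
Definition diffset (A B : {fset G}) : {fset G} := [fset a - b | a in A, b in B].

Definition pmset (plus : bool) (A B : {fset G}) : {fset G} :=
  if plus then sumset A B else diffset A B.

Definition Ashift (A : {fset G}) (s : G) : {fset G} :=
  A `&` [fset a - s | a in A].

(* E_k(A) = sum_s |A_s|^k ; A_s is empty unless s ∈ A - A, so the sum over
   Gamma equals the (finite) sum over A - A. *)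
Definition energy (k : nat) (A : {fset G}) : nat :=
  (\sum_(s <- diffset A A) #|` Ashift A s| ^ k)%N.

(* max_{s != 0} |A ± A_s|  (A_s = ∅ for s ∉ A - A, so only s ∈ A - A matter;
   the empty max is 0) *)
Definition maxpm (plus : bool) (A : {fset G}) : nat :=
  (\max_(s <- diffset A A | s != 0%R) #|` pmset plus A (Ashift A s)|)%N.

(* A is (alpha, beta, gamma)-connected, for alpha = k a natural number *)
Definition connected (R : realFieldType) (k : nat) (beta gamma : R)
  (A : {fset G}) : Prop :=
  forall B : {fset G}, B `<=` A ->
    (#|` B|%:R >= beta * #|` A|%:R) ->
    (energy k B)%:R >= gamma * ((#|` B|%:R / #|` A|%:R) ^+ (2 * k)) * (energy k A)%:R.
End Defs.

From HB Require Import structures.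
From mathcomp Require Import all_boot all_order all_algebra.
From mathcomp Require Import finmap.
From mathcomp Require Import zify ring lra.
Import Order.TTheory GRing.Theory Num.Theory.
Local Open Scope fset_scope.
Local Open Scope ring_scope.
Set Implicit Arguments. Unset Strict Implicit. Unset Printing Implicit Defensive.

(* Write M for max_{s <> 0} |A ± A_s|, E = E(A), and E'_k(X) for the part of
   E_k(X) coming from the shifts s <> 0.  Cauchy-Schwarz on the representation
   function of A ± A_s gives |A|^2 |A_s|^2 <= M * sum_d |A_d| |(A_s)_d|, and the
   right-hand sides sum over s to M * E_3(A).  Hence |A|^2 E'_2 <= M E_3, and,
   with one more Cauchy-Schwarz in d, |A|^4 E'_3 <= M^2 E E'_2.  If E_3 >= 2|A|^3
   the diagonal term |A|^3 is at most half of E_3; multiplying the two bounds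
   gives |A|^6 <= 2 M^3 E, and |A|^4 <= |A - A| E gives the first claim.
   For the second claim the same argument, run over the set B of points of A
   with at most twice the average weight, gives |A|^3 E'_3(B) <= 2 M E^2;
   since |B| >= |A|/2, connectedness makes E'_3(B) >> gamma E_3(A), and
   |A|^2 E <= 2 M E_3 converts this into M^2 >> gamma |A|^5 / E. *)

Lemma sum_eq_mul_uniq (T : eqType) (r : seq T) (a : T) (F : T -> nat) :
  uniq r -> (\sum_(i <- r) (a == i) * F i = (a \in r) * F a)%N.
Proof.
move=> ur; rewrite (eq_bigr (fun i => (a == i) * F a)%N); last first.
  by move=> i _; case: eqP => // ->.
rewrite -big_distrl /=; congr (_ * _)%N.
rewrite (eq_bigr (fun i => if pred1 a i then 1 else 0)%N); last first.
  by move=> i _; rewrite /= eq_sym; case: eqP.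
by rewrite -big_mkcond sum1_count count_uniq_mem.
Qed.

Lemma cauchy_schwarz (R : realDomainType) (I : Type) (r : seq I) (f g : I -> R) :
  (\sum_(i <- r) f i * g i) ^+ 2 <= (\sum_(i <- r) f i ^+ 2) * (\sum_(i <- r) g i ^+ 2).
Proof.
set Sf := \sum_(i <- r) f i ^+ 2; set Sg := \sum_(i <- r) g i ^+ 2.
set Sfg := \sum_(i <- r) f i * g i.
have lagrange : \sum_(i <- r) \sum_(j <- r) (f i * g j - f j * g i) ^+ 2 =
    2 * (Sf * Sg - Sfg ^+ 2).
  have sq_expand i j : (f i * g j - f j * g i) ^+ 2 =
      f i ^+ 2 * g j ^+ 2 + f j ^+ 2 * g i ^+ 2 - 2 * ((f i * g i) * (f j * g j)).
    by rewrite sqrrB !exprMn; ring.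
  have SfSg : \sum_(i <- r) \sum_(j <- r) f i ^+ 2 * g j ^+ 2 = Sf * Sg.
    by rewrite big_distrl /=; apply: eq_bigr => i _; rewrite big_distrr.
  have SgSf : \sum_(i <- r) \sum_(j <- r) f j ^+ 2 * g i ^+ 2 = Sf * Sg.
    by rewrite exchange_big /= SfSg.
  have Sfg2 : \sum_(i <- r) \sum_(j <- r) (f i * g i) * (f j * g j) = Sfg ^+ 2.
    by rewrite expr2 big_distrl /=; apply: eq_bigr => i _; rewrite big_distrr.
  rewrite (eq_bigr (fun i => \sum_(j <- r) f i ^+ 2 * g j ^+ 2
      + \sum_(j <- r) f j ^+ 2 * g i ^+ 2
      - 2 * \sum_(j <- r) (f i * g i) * (f j * g j))); last first.
    move=> i _; rewrite mulr_sumr -big_split -sumrB /=.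
    by apply: eq_bigr => j _; rewrite sq_expand.
  by rewrite sumrB big_split /= SfSg SgSf -mulr_sumr Sfg2; ring.
have : 0 <= \sum_(i <- r) \sum_(j <- r) (f i * g j - f j * g i) ^+ 2.
  by apply: sumr_ge0 => i _; apply: sumr_ge0 => j _; apply: sqr_ge0.
by rewrite lagrange pmulr_rge0 // subr_ge0.
Qed.

Lemma cauchy_schwarz_nat (I : Type) (r : seq I) (f g : I -> nat) :
  ((\sum_(i <- r) f i * g i) ^ 2 <= (\sum_(i <- r) f i ^ 2) * (\sum_(i <- r) g i ^ 2))%N.
Proof.
rewrite -(ler_nat rat) !natrX natrM !natr_sum.
under eq_bigr do rewrite natrM.
under [X in _ <= X * _]eq_bigr do rewrite natrX.
under [X in _ <= _ * X]eq_bigr do rewrite natrX.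
exact: cauchy_schwarz.
Qed.

Lemma sqr_sum_le_size (I : Type) (r : seq I) (f : I -> nat) :
  ((\sum_(i <- r) f i) ^ 2 <= size r * \sum_(i <- r) f i ^ 2)%N.
Proof.
have := cauchy_schwarz_nat r f (fun _ => 1%N).
under eq_bigr do rewrite muln1.
by under [X in (_ <= _ * X)%N -> _]eq_bigr do rewrite exp1n; rewrite sum1_size mulnC.
Qed.

Lemma sum_fsubset (T : choiceType) (D' D : {fset T}) (F : T -> nat) :
  D' `<=` D -> (forall s, s \in D -> s \notin D' -> F s = 0%N) ->
  (\sum_(s <- D) F s = \sum_(s <- D') F s)%N.
Proof.
move=> /fsubsetP sub F0.
rewrite (big_fsetID _ (mem D')) /= [X in (_ + X)%N]big1_fset ?addn0.
  by apply: eq_fbigl => x; rewrite !inE /= andbC; case xD: (x \in D') => //=; rewrite sub.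
by move=> s; rewrite !inE /= => /andP[sD' sD] _; apply: F0.
Qed.

Lemma sum_cond_le (T : eqType) (r : seq T) (P : pred T) (F : T -> nat) :
  (\sum_(s <- r | P s) F s <= \sum_(s <- r) F s)%N.
Proof. by rewrite [X in (_ <= X)%N](bigID P) /= leq_addr. Qed.

Lemma markov_card (T : choiceType) (A : {fset T}) (f : T -> nat) :
  (0 < \sum_(a <- A) f a)%N ->
  (#|` A| <= 2 * #|` [fset a in A | #|` A| * f a <= 2 * \sum_(a <- A) f a]|)%N.
Proof.
set S := (\sum_(a <- A) f a)%N => S0.
set P := fun a => (#|` A| * f a <= 2 * S)%N.
have cardP : #|` [fset a in A | P a]| = (\sum_(a <- A | P a) 1)%N.
  by rewrite card_fset_sum1 -big_fset_condE.
have cardA : #|` A| = (\sum_(a <- A | P a) 1 + \sum_(a <- A | ~~ P a) 1)%N.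
  by rewrite card_fset_sum1 (bigID P).
set k := (\sum_(a <- A | ~~ P a) 1)%N in cardA.
have heavy : (2 * S * k <= #|` A| * S)%N.
  have -> : (#|` A| * S = \sum_(a <- A) #|` A| * f a)%N by rewrite big_distrr.
  rewrite /k big_distrr /=; apply: leq_trans (sum_cond_le _ (predC P) _).
  by apply: leq_sum => a; rewrite /P -ltnNge muln1 => /ltnW.
have : (2 * k <= #|` A|)%N by rewrite -(leq_pmul2r S0) mulnAC.
by rewrite cardP; move: cardA; lia.
Qed.

Section ShiftEnergies.
Variable G : zmodType.
Implicit Types (A B X Y D : {fset G}) (s d : G).

Lemma in_Ashift X s x : (x \in Ashift X s) = (x \in X) && (x + s \in X).
Proof.
rewrite /Ashift in_fsetI; congr (_ && _); apply/imfsetP/idP => [[a aX ->]|xs].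
  by rewrite subrK.
by exists (x + s) => //; rewrite addrK.
Qed.

Lemma Ashift_subset X s : Ashift X s `<=` X.
Proof. by apply/fsubsetP => x; rewrite in_Ashift => /andP[]. Qed.

Lemma subset_Ashift X Y s : X `<=` Y -> Ashift X s `<=` Ashift Y s.
Proof.
by move/fsubsetP=> XY; apply/fsubsetP => x; rewrite !in_Ashift => /andP[/XY-> /XY->].
Qed.

Lemma Ashift0 X : Ashift X 0 = X.
Proof. by apply/fsetP => x; rewrite in_Ashift addr0 andbb. Qed.

Lemma AshiftC X s d : Ashift (Ashift X s) d = Ashift (Ashift X d) s.
Proof.
by apply/fsetP => x; rewrite !in_Ashift -!addrA [s + d]addrC; do 4 case: (_ \in X).
Qed.

Lemma card_Ashift_leq X s : (#|` Ashift X s| <= #|` X|)%N.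
Proof. exact/fsubset_leq_card/Ashift_subset. Qed.

Lemma card_AshiftE X s : #|` Ashift X s| = (\sum_(x <- X) ((x + s)%R \in X))%N.
Proof.
have -> : Ashift X s = [fset x in X | x + s \in X].
  by apply/fsetP => x; rewrite in_Ashift !inE.
rewrite card_fset_sum1 -big_fset_condE big_mkcond /=.
by apply: eq_bigr => x _; case: (_ \in _).
Qed.

Lemma mem_diffset A x y : x \in A -> y \in A -> x - y \in diffset A A.
Proof. by move=> xA yA; apply/imfset2P; exists x => //; exists y. Qed.

Lemma diffset_subset A X : X `<=` A -> {in X &, forall x x', x' - x \in diffset A A}.
Proof. by move/fsubsetP=> XA x x' /XA xA /XA x'A; apply: mem_diffset. Qed.

Lemma diffset0 A : (0 < #|` A|)%N -> 0 \in diffset A A.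
Proof. by rewrite cardfs_gt0 => /fset0Pn [x xA]; rewrite -(subrr x) mem_diffset. Qed.

Lemma card_Ashift_eq0 A X s :
  X `<=` A -> s \notin diffset A A -> #|` Ashift X s| = 0%N.
Proof.
move/fsubsetP=> XA sD; apply/eqP; rewrite cardfs_eq0; apply/eqP/fsetP => x.
rewrite in_Ashift inE; apply/negbTE/negP => /andP[xX xsX].
by move: sD; rewrite -(addKr x s) addrC mem_diffset // XA.
Qed.

Lemma sum_shift D X y (g : G -> nat) :
  (forall u, u \in X -> u - y \in D) ->
  (\sum_(s <- D) ((y + s)%R \in X) * g (y + s)%R = \sum_(u <- X) g u)%N.
Proof.
move=> XD.
transitivity (\sum_(s <- D) \sum_(u <- X) ((y + s)%R == u) * g u)%N.
  by apply: eq_bigr => s _; rewrite sum_eq_mul_uniq ?fset_uniq.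
rewrite exchange_big /=; apply: eq_big_seq => u uX.
transitivity (\sum_(s <- D) ((u - y)%R == s) * g u)%N.
  by apply: eq_bigr => s _; rewrite subr_eq eq_sym addrC.
by rewrite sum_eq_mul_uniq ?fset_uniq // XD // mul1n.
Qed.

Lemma sum_card_Ashift D X :
  {in X &, forall x x', x' - x \in D} -> (\sum_(s <- D) #|` Ashift X s| = #|` X| ^ 2)%N.
Proof.
move=> XD; under eq_bigr do rewrite card_AshiftE.
rewrite exchange_big /= (eq_big_seq (fun _ => 1 * #|` X|)%N).
  by rewrite -big_distrl /= -card_fset_sum1.
move=> x xX; rewrite mul1n card_fset_sum1 -(@sum_shift D X x (fun _ => 1%N)).
  by apply: eq_bigr => s _; rewrite muln1.
by move=> u uX; apply: XD.
Qed.

Definition cross_energy D X Y : nat :=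
  (\sum_(d <- D) #|` Ashift X d| * #|` Ashift Y d|)%N.

Lemma card_Ashift_pairs X d :
  (\sum_(x <- X) \sum_(x' <- X) ((x' - x)%R == d) = #|` Ashift X d|)%N.
Proof.
rewrite card_AshiftE; apply: eq_bigr => x _.
transitivity (\sum_(x' <- X) ((x + d)%R == x') * 1)%N.
  by apply: eq_bigr => x' _; rewrite muln1 subr_eq eq_sym addrC.
by rewrite sum_eq_mul_uniq ?fset_uniq // muln1.
Qed.

Lemma cross_energy_quadruples D X Y :
  {in X &, forall x x', x' - x \in D} ->
  (\sum_(x <- X) \sum_(x' <- X) \sum_(y <- Y) \sum_(y' <- Y) ((x' - x)%R == (y' - y)%R)
   = cross_energy D X Y)%N.
Proof.
move=> XD; rewrite /cross_energy.
under [RHS]eq_bigr do rewrite -!card_Ashift_pairs big_distrl /=.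
under [RHS]eq_bigr do under eq_bigr do rewrite big_distrl /=.
under [RHS]eq_bigr do under eq_bigr do under eq_bigr do rewrite big_distrr /=.
under [RHS]eq_bigr do under eq_bigr do under eq_bigr do under eq_bigr do
  rewrite big_distrr /=.
rewrite [RHS]exchange_big /=; apply: eq_big_seq => x xX.
rewrite [RHS]exchange_big /=; apply: eq_big_seq => x' x'X.
rewrite [RHS]exchange_big /=; apply: eq_bigr => y _.
rewrite [RHS]exchange_big /=; apply: eq_bigr => y' _.
by rewrite sum_eq_mul_uniq ?fset_uniq // XD // mul1n eq_sym.
Qed.

Lemma eq_add_sub (a b c d : G) : (a + b == c + d) = (c - a == b - d).
Proof.
apply/eqP/eqP => [E|E]; first by rewrite -(addrK d c) -E addrAC (addrC a) addrK.
by rewrite -(subrK a c) E addrAC subrK addrC.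
Qed.

Lemma eq_sub_add (u v a b : G) : (u - a == v - b) = (u + b == v + a).
Proof.
apply/eqP/eqP => [E|E]; first by rewrite -(subrK a u) E addrAC subrK.
by rewrite -(addrK b u) E addrAC addrK.
Qed.

Definition pm (plus : bool) (x y : G) := if plus then x + y else x - y.

Lemma pm_quadruples p D X Y :
  {in X &, forall x x', x' - x \in D} ->
  (\sum_(x' <- X) \sum_(y' <- Y) \sum_(x <- X) \sum_(y <- Y) (pm p x y == pm p x' y')
   = cross_energy D X Y)%N.
Proof.
move=> XD; rewrite -cross_energy_quadruples //.
under eq_bigr do rewrite exchange_big /=.
rewrite exchange_big /=; apply: eq_bigr => x _; apply: eq_bigr => x' _.
rewrite /pm; case: p.
  by apply: eq_bigr => y _; apply: eq_bigr => y' _; rewrite eq_add_sub.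
rewrite exchange_big /=; apply: eq_bigr => y _; apply: eq_bigr => y' _.
by rewrite eq_sub_add eq_add_sub.
Qed.

Lemma pm_in_pmset p X Y x y : x \in X -> y \in Y -> pm p x y \in pmset p X Y.
Proof. by move=> xX yY; case: p; apply/imfset2P; exists x => //; exists y. Qed.

(* Cauchy-Schwarz over the representation function of X ± Y. *)
Lemma card_pmset_cross_energy p D X Y :
  {in X &, forall x x', x' - x \in D} ->
  (#|` X| ^ 2 * #|` Y| ^ 2 <= #|` pmset p X Y| * cross_energy D X Y)%N.
Proof.
move=> XD; set S := pmset p X Y.
pose rep z := (\sum_(x <- X) \sum_(y <- Y) (pm p x y == z))%N.
have sum_rep : (\sum_(z <- S) rep z = #|` X| * #|` Y|)%N.
  rewrite /rep exchange_big /= card_fset_sum1 big_distrl /=.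
  apply: eq_big_seq => x xX; rewrite exchange_big /= card_fset_sum1 big_distrr /=.
  apply: eq_big_seq => y yY; rewrite muln1.
  transitivity (\sum_(z <- S) (pm p x y == z) * 1)%N.
    by apply: eq_bigr => z _; rewrite muln1.
  by rewrite sum_eq_mul_uniq ?fset_uniq // pm_in_pmset.
have sum_rep2 : (\sum_(z <- S) rep z ^ 2 = cross_energy D X Y)%N.
  rewrite -(pm_quadruples p Y XD).
  transitivity (\sum_(z <- S) \sum_(x' <- X) \sum_(y' <- Y) (pm p x' y' == z) * rep z)%N.
    apply: eq_bigr => z _; rewrite expnS expn1 {1}/rep big_distrl /=.
    by apply: eq_bigr => x' _; rewrite big_distrl.
  rewrite exchange_big /=; apply: eq_big_seq => x' x'X.
  rewrite exchange_big /=; apply: eq_big_seq => y' y'Y.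
  by rewrite sum_eq_mul_uniq ?fset_uniq // pm_in_pmset // mul1n.
by have := sqr_sum_le_size S rep; rewrite sum_rep sum_rep2 expnMn card_fset_sum1 sum1_size.
Qed.

Lemma cross_energy_CS D X Y :
  (cross_energy D X Y ^ 2 <= cross_energy D X X * cross_energy D Y Y)%N.
Proof.
have := cauchy_schwarz_nat D (fun d => #|` Ashift X d|) (fun d => #|` Ashift Y d|).
by congr (_ <= _ * _)%N; apply: eq_bigr => d _; rewrite expnS expn1.
Qed.

Lemma cross_energy_self_le A C :
  C `<=` A -> (cross_energy (diffset A A) C C <= #|` C| ^ 3)%N.
Proof.
move=> CA; apply: (@leq_trans (\sum_(d <- diffset A A) #|` C| * #|` Ashift C d|)%N).
  by apply: leq_sum => d _; rewrite leq_mul2r card_Ashift_leq orbT.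
rewrite -big_distrr /= sum_card_Ashift; first by rewrite expnS expn1.
exact: diffset_subset.
Qed.

Definition energy_nz (k : nat) A X : nat :=
  (\sum_(s <- diffset A A | s != 0%R) #|` Ashift X s| ^ k)%N.

Lemma energyE_diffset k A X :
  X `<=` A -> (0 < k)%N -> energy k X = (\sum_(s <- diffset A A) #|` Ashift X s| ^ k)%N.
Proof.
move=> XA k0; symmetry; apply: sum_fsubset.
  apply/fsubsetP => _ /imfset2P [x xX [y yX ->]].
  by apply: mem_diffset; apply: (fsubsetP XA).
by move=> s _ sX; rewrite (card_Ashift_eq0 (fsubset_refl X) sX) exp0n.
Qed.

Lemma energy_split k A X : X `<=` A -> (0 < k)%N -> (0 < #|` A|)%N ->
  energy k X = (#|` X| ^ k + energy_nz k A X)%N.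
Proof.
move=> XA k0 /diffset0 D0.
by rewrite (energyE_diffset XA k0) (bigD1_seq 0) ?fset_uniq //= Ashift0.
Qed.

Lemma energy2_cross A : energy 2 A = cross_energy (diffset A A) A A.
Proof. by rewrite (energyE_diffset (fsubset_refl A)). Qed.

Lemma sum_cross_energy_Ashift A :
  (\sum_(s <- diffset A A) cross_energy (diffset A A) A (Ashift A s) = energy 3 A)%N.
Proof.
rewrite (energyE_diffset (fsubset_refl A)) // /cross_energy exchange_big /=.
apply: eq_bigr => d _; rewrite -big_distrr /=.
under eq_bigr do rewrite AshiftC.
rewrite sum_card_Ashift ?expnS ?expn1 ?mulnA //.
exact/diffset_subset/Ashift_subset.
Qed.

Lemma card4_le_diffset_energy A : (#|` A| ^ 4 <= #|` diffset A A| * energy 2 A)%N.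
Proof.
have := card_pmset_cross_energy false A (diffset_subset (fsubset_refl A)).
by rewrite -energy2_cross -expnD.
Qed.

Lemma energy_nz3_le A X :
  X `<=` A -> (energy_nz 3 A X <= #|` A| * energy_nz 2 A X)%N.
Proof.
move=> XA; rewrite big_distrr /=; apply: leq_sum => s _.
rewrite expnS leq_mul2r; apply/orP; right.
exact/(leq_trans (card_Ashift_leq X s))/fsubset_leq_card.
Qed.

Lemma pmset_subset p A Y Z : Y `<=` Z -> pmset p A Y `<=` pmset p A Z.
Proof.
move/fsubsetP=> YZ; apply/fsubsetP => z.
by case: p => /imfset2P [x xA [y yY ->]]; apply/imfset2P; exists x => //;
  exists y => //; apply: YZ.
Qed.

Lemma card_pmset_le_maxpm p A X s : X `<=` A -> s \in diffset A A -> s != 0 ->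
  (#|` pmset p A (Ashift X s)| <= maxpm p A)%N.
Proof.
move=> XA sD s0.
have := @leq_bigmax_seq _ (enum_fset (diffset A A)) (fun s => s != 0)
  (fun s => #|` pmset p A (Ashift A s)|) s sD s0.
exact/leq_trans/fsubset_leq_card/pmset_subset/subset_Ashift.
Qed.

Lemma card_Ashift_maxpm p A X s : X `<=` A -> s \in diffset A A -> s != 0 ->
  (#|` A| ^ 2 * #|` Ashift X s| ^ 2 <=
     maxpm p A * cross_energy (diffset A A) A (Ashift X s))%N.
Proof.
move=> XA sD s0.
apply: leq_trans (card_pmset_cross_energy p _ (diffset_subset (fsubset_refl A))) _.
by rewrite leq_mul2r card_pmset_le_maxpm ?orbT.
Qed.

Lemma energy_nz2_le_maxpm p A :
  (#|` A| ^ 2 * energy_nz 2 A A <= maxpm p A * energy 3 A)%N.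
Proof.
rewrite big_distrr /= -sum_cross_energy_Ashift big_distrr /=.
apply: leq_trans (sum_cond_le _ (fun s => s != 0%R) _).
rewrite [X in (X <= _)%N]big_seq_cond [X in (_ <= X)%N]big_seq_cond.
by apply: leq_sum => s /andP[sD s0]; apply: card_Ashift_maxpm.
Qed.

Lemma card_Ashift_cube_le p A s : s \in diffset A A -> s != 0 ->
  (#|` A| ^ 4 * #|` Ashift A s| ^ 3 <= maxpm p A ^ 2 * energy 2 A * #|` Ashift A s| ^ 2)%N.
Proof.
move=> sD s0; set c := #|` Ashift A s|; set M := maxpm p A; set n := #|` A|.
pose Q := cross_energy (diffset A A) A (Ashift A s).
have sumset_bound : (n ^ 2 * c ^ 2 <= M * Q)%N :=
  card_Ashift_maxpm p (fsubset_refl A) sD s0.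
have Q_bound : (Q ^ 2 <= energy 2 A * c ^ 3)%N.
  rewrite energy2_cross; apply: leq_trans (cross_energy_CS _ A (Ashift A s)) _.
  by rewrite leq_mul2l cross_energy_self_le ?orbT // Ashift_subset.
have : (c * (n ^ 4 * c ^ 3) <= c * (M ^ 2 * energy 2 A * c ^ 2))%N.
  have -> : (c * (n ^ 4 * c ^ 3) = (n ^ 2 * c ^ 2) ^ 2)%N by ring.
  have -> : (c * (M ^ 2 * energy 2 A * c ^ 2) = M ^ 2 * (energy 2 A * c ^ 3))%N by ring.
  apply: (@leq_trans ((M * Q) ^ 2)); first by rewrite leq_sqr sumset_bound.
  by rewrite expnMn leq_mul2l Q_bound orbT.
by case: (posnP c) => [->|c0]; [rewrite !exp0n ?muln0 | rewrite leq_pmul2l].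
Qed.

Lemma energy_nz3_le_maxpm p A :
  (#|` A| ^ 4 * energy_nz 3 A A <= maxpm p A ^ 2 * energy 2 A * energy_nz 2 A A)%N.
Proof.
rewrite [X in (X <= _)%N]big_distrr [X in (_ <= X)%N]big_distrr /=.
rewrite [X in (X <= _)%N]big_seq_cond [X in (_ <= X)%N]big_seq_cond.
by apply: leq_sum => s /andP[sD s0]; apply: card_Ashift_cube_le.
Qed.

Section LargeEnergy3.
Variables (p : bool) (A : {fset G}).
Let n := #|` A|.
Let M := maxpm p A.
Let E := energy 2 A.
Let E3 := energy 3 A.
Hypothesis n_gt0 : (0 < n)%N.
Hypothesis E3_large : (2 * n ^ 3 <= E3)%N.

Lemma energy3_split : E3 = (n ^ 3 + energy_nz 3 A A)%N.
Proof. exact: energy_split. Qed.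

Lemma energy2_split : E = (n ^ 2 + energy_nz 2 A A)%N.
Proof. exact: energy_split. Qed.

Lemma card_sqr_le_energy_nz2 : (n ^ 2 <= energy_nz 2 A A)%N.
Proof.
rewrite -(leq_pmul2l n_gt0); apply: leq_trans (energy_nz3_le (fsubset_refl A)).
by rewrite -expnS; have := energy3_split; lia.
Qed.

Lemma energy2_le_maxpm_energy3 : (n ^ 2 * E <= 2 * M * E3)%N.
Proof.
have := energy_nz2_le_maxpm p A; have := card_sqr_le_energy_nz2.
rewrite energy2_split -/n -/M -/E3; nia.
Qed.

Lemma card6_le_maxpm_energy2 : (n ^ 6 <= 2 * M ^ 3 * E)%N.
Proof.
set E' := energy_nz 2 A A; set E3' := energy_nz 3 A A.
have E'_gt0 : (0 < E')%N.
  by apply: leq_trans card_sqr_le_energy_nz2; rewrite expn_gt0 n_gt0.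
have E3_gt0 : (0 < E3)%N by apply: leq_trans E3_large; rewrite muln_gt0 expn_gt0 n_gt0.
have E3_le : (E3 <= 2 * E3')%N by have := energy3_split; rewrite -/E3'; lia.
have h : (n ^ 6 * E3' * E' <= M ^ 3 * E * E3 * E')%N.
  have := leq_mul (energy_nz2_le_maxpm p A) (energy_nz3_le_maxpm p A).
  rewrite -/n -/M -/E -/E3 -/E' -/E3'.
  have -> : (n ^ 2 * E' * (n ^ 4 * E3') = n ^ 6 * E3' * E')%N by ring.
  by have -> : (M * E3 * (M ^ 2 * E * E') = M ^ 3 * E * E3 * E')%N by ring.
rewrite leq_pmul2r // in h.
rewrite -(leq_pmul2r E3_gt0); apply: (@leq_trans (n ^ 6 * (2 * E3'))%N).
  by rewrite leq_mul2l E3_le orbT.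
have -> : (n ^ 6 * (2 * E3') = 2 * (n ^ 6 * E3'))%N by ring.
by apply: leq_trans (leq_mul (leqnn 2) h) _; rewrite !mulnA.
Qed.

End LargeEnergy3.

(* For D containing X - X, shift_weight D X b counts the pairs (x, x') in X^2
   with b + x' - x in X; it sums to E(X) over b in X. *)
Definition shift_weight D X b : nat :=
  (\sum_(s <- D) ((b + s)%R \in X) * #|` Ashift X s|)%N.

Lemma sum_shift_weight D X :
  (\sum_(b <- X) shift_weight D X b = \sum_(s <- D) #|` Ashift X s| ^ 2)%N.
Proof.
rewrite /shift_weight exchange_big /=; apply: eq_bigr => s _.
by rewrite -big_distrl /= -card_AshiftE expnS expn1.
Qed.

Lemma card_Ashift2_le A B s d : B `<=` A ->
  (#|` Ashift (Ashift B s) d| <= \sum_(x <- B) ((x + s)%R \in B) * ((x + d)%R \in A))%N.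
Proof.
move=> /fsubsetP BA; rewrite card_AshiftE.
apply: (@leq_trans (\sum_(x <- Ashift B s) ((x + d)%R \in A))%N).
  apply: leq_sum => x _; case xBs: (_ \in Ashift B s) => //.
  by move: xBs => /(fsubsetP (Ashift_subset B s)) /BA ->.
have -> : Ashift B s = [fset x in B | (x + s)%R \in B].
  by apply/fsetP => x; rewrite in_Ashift !inE.
rewrite -big_fset_condE big_mkcond /=.
by apply: leq_sum => x _; case: (_ \in B); rewrite ?mul1n ?mul0n.
Qed.

Lemma sum_Ashift_cross_energy_le A B : B `<=` A ->
  (\sum_(s <- diffset A A) #|` Ashift B s| * cross_energy (diffset A A) A (Ashift B s)
    <= \sum_(x <- B) shift_weight (diffset A A) B x * shift_weight (diffset A A) A x)%N.
Proof.
move=> BA; set D := diffset A A.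
have -> : (\sum_(x <- B) shift_weight D B x * shift_weight D A x =
    \sum_(s <- D) #|` Ashift B s| * \sum_(d <- D) #|` Ashift A d| *
      \sum_(x <- B) ((x + s)%R \in B) * ((x + d)%R \in A))%N.
  rewrite /shift_weight.
  under eq_bigr do rewrite big_distrl /=.
  under eq_bigr do under eq_bigr do rewrite big_distrr /=.
  rewrite exchange_big /=; apply: eq_bigr => s _.
  rewrite big_distrr /= exchange_big /=; apply: eq_bigr => d _.
  by rewrite mulnA big_distrr /=; apply: eq_bigr => x _; ring.
apply: leq_sum => s _; rewrite leq_mul2l; apply/orP; right.
by apply: leq_sum => d _; rewrite leq_mul2l card_Ashift2_le ?orbT.
Qed.

Lemma energy_nz3_le_cross p A B : B `<=` A ->
  (#|` A| ^ 2 * energy_nz 3 A B <= maxpm p A *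
     \sum_(s <- diffset A A) #|` Ashift B s| * cross_energy (diffset A A) A (Ashift B s))%N.
Proof.
move=> BA; rewrite [X in (X <= _)%N]big_distrr [X in (_ <= X)%N]big_distrr /=.
apply: leq_trans (sum_cond_le _ (fun s => s != 0%R) _).
rewrite [X in (X <= _)%N]big_seq_cond [X in (_ <= X)%N]big_seq_cond.
apply: leq_sum => s /andP[sD s0].
have -> : (#|` A| ^ 2 * #|` Ashift B s| ^ 3 =
  #|` Ashift B s| * (#|` A| ^ 2 * #|` Ashift B s| ^ 2))%N by ring.
by rewrite [X in (_ <= X)%N]mulnCA leq_mul2l card_Ashift_maxpm ?orbT.
Qed.

Lemma energy_nz3_light_le p A B : B `<=` A ->
  {in B, forall b, #|` A| * shift_weight (diffset A A) A b <= 2 * energy 2 A}%N ->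
  (#|` A| ^ 3 * energy_nz 3 A B <= 2 * maxpm p A * energy 2 A ^ 2)%N.
Proof.
move=> BA light; set D := diffset A A; set E := energy 2 A; set n := #|` A|.
have weights : (n * \sum_(x <- B) shift_weight D B x * shift_weight D A x <= 2 * E * E)%N.
  rewrite big_distrr /=.
  apply: (@leq_trans (\sum_(x <- B) shift_weight D B x * (2 * E))%N).
    rewrite big_seq [X in (_ <= X)%N]big_seq; apply: leq_sum => x xB.
    by rewrite mulnCA leq_mul2l light ?orbT.
  rewrite -big_distrl /= sum_shift_weight mulnC leq_mul2l; apply/orP; right.
  rewrite /E (energyE_diffset (fsubset_refl A)) //; apply: leq_sum => s _.
  by rewrite leq_exp2r // fsubset_leq_card // subset_Ashift.
have cs := energy_nz3_le_cross p BA; rewrite -/D -/n in cs.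
have overlap := leq_trans (leq_mul (leqnn n) (sum_Ashift_cross_energy_le BA)) weights.
have -> : (n ^ 3 * energy_nz 3 A B = n * (n ^ 2 * energy_nz 3 A B))%N by ring.
apply: leq_trans (leq_mul (leqnn n) cs) _; rewrite mulnCA.
by apply: leq_trans (leq_mul (leqnn (maxpm p A)) overlap) _; apply: eq_leq; ring.
Qed.

(* By Markov's inequality, the points of weight at most twice the average
   E(A)/|A| make up at least half of A. *)
Lemma exists_light_subset p A : (0 < #|` A|)%N ->
  exists B, [/\ B `<=` A, (#|` A| <= 2 * #|` B|)%N &
    (#|` A| ^ 3 * energy_nz 3 A B <= 2 * maxpm p A * energy 2 A ^ 2)%N].
Proof.
move=> n_gt0; set D := diffset A A.
have sumW : (\sum_(a <- A) shift_weight D A a = energy 2 A)%N.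
  by rewrite sum_shift_weight (energyE_diffset (fsubset_refl A)).
pose B := [fset a in A | #|` A| * shift_weight D A a <= 2 * energy 2 A]%N.
have BA : B `<=` A by apply/fsubsetP => a; rewrite !inE => /andP[].
exists B; split => //.
  rewrite /B -sumW; apply: markov_card; rewrite sumW.
  rewrite (energy_split (fsubset_refl A)) //.
  by rewrite ltn_addr // expn_gt0 n_gt0.
by apply: energy_nz3_light_le => // b; rewrite !inE => /andP[].
Qed.

End ShiftEnergies.

(* Used with b = |B| >= n/2 and X = E'_3(B): the diagonal b^3 of E_3(B) is
   negligible against the lower bound that connectedness gives. *)
Lemma connected_energy3_le (R : realFieldType) (n b g E3 X : R) :
  0 < n -> n <= 2 * b -> 16 * n ^+ 3 <= g * E3 ->
  g * (b / n) ^+ 6 * E3 <= b ^+ 3 + X -> g * E3 <= 128 * X.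
Proof.
move=> n_gt0 nb E3_large B_energy; set u := (b / n) ^+ 3.
have u_ge : 1 <= 8 * u.
  have -> : 8 * u = (2 * b / n) ^+ 3 by rewrite /u !expr_div_n; ring.
  by rewrite exprn_ege1 // ler_pdivlMr // mul1r.
have b3 : b ^+ 3 = u * n ^+ 3 by rewrite /u expr_div_n divfK // expf_neq0 // gt_eqF.
have u2 : g * (b / n) ^+ 6 * E3 = u ^+ 2 * (g * E3) by rewrite /u -exprM; ring.
rewrite u2 b3 in B_energy.
have n3 : 0 < n ^+ 3 by rewrite exprn_gt0.
have gE3 : 0 <= g * E3 by lra.
have u2_ge : 1 <= 64 * u ^+ 2 by rewrite expr2; nra.
have un3 : u * n ^+ 3 <= u ^+ 2 * (g * E3) / 2.
  have u_le : u <= 8 * u ^+ 2 by rewrite expr2; nra.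
  by have := ler_wpM2r (ltW n3) u_le; have := ler_wpM2l (sqr_ge0 u) E3_large; lra.
have : u ^+ 2 * (g * E3) <= 2 * X by lra.
nra.
Qed.

Lemma maxpm_cube_lower_bound (G : zmodType) p (A : {fset G}) :
  (2 * #|` A| ^ 3 <= energy 3 A)%N ->
  (#|` A| ^ 10 <= 2 * maxpm p A ^ 3 * #|` diffset A A| * energy 2 A ^ 2)%N.
Proof.
move=> E3_large; have [->|n_gt0] := posnP #|` A|; first by rewrite exp0n.
have := leq_mul (card6_le_maxpm_energy2 p n_gt0 E3_large) (card4_le_diffset_energy A).
by rewrite -expnD; congr (_ <= _)%N; ring.
Qed.

Lemma combine_energy_bounds (R : realFieldType) (n g M E E3 X : R) :
  0 < n -> 0 < E3 -> 0 <= M -> 0 <= E ->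
  g * E3 <= 128 * X -> n ^+ 3 * X <= 2 * M * E ^+ 2 -> n ^+ 2 * E <= 2 * M * E3 ->
  g * n ^+ 5 <= 512 * M ^+ 2 * E.
Proof.
move=> n_gt0 E3_gt0 M_ge0 E_ge0 E3_le X_le E_le.
have n3E3 : n ^+ 3 * (g * E3) <= 256 * M * E ^+ 2.
  by have := ler_wpM2l (ltW (exprn_gt0 3 n_gt0)) E3_le; lra.
rewrite -(ler_pM2r E3_gt0).
have -> : g * n ^+ 5 * E3 = n ^+ 2 * (n ^+ 3 * (g * E3)) by ring.
apply: le_trans (ler_wpM2l (exprn_ge0 2 (ltW n_gt0)) n3E3) _.
by have := ler_wpM2l (mulr_ge0 M_ge0 E_ge0) E_le; rewrite !expr2; lra.
Qed.

Lemma maxpm_sqr_lower_bound (R : realFieldType) (G : zmodType) p (A : {fset G})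
    (beta gamma : R) :
  0 < gamma <= 1 -> beta <= 1 / 2 -> connected 3 beta gamma A ->
  16 * #|` A|%:R ^+ 3 <= gamma * (energy 3 A)%:R ->
  gamma * #|` A|%:R ^+ 5 <= 512 * (maxpm p A)%:R ^+ 2 * (energy 2 A)%:R.
Proof.
move=> /andP[g_gt0 g_le1] beta_le A_conn E3_large16.
have [n0|n_gt0] := posnP #|` A|.
  by rewrite n0 expr0n mulr0 !mulr_ge0 ?exprn_ge0.
have E3_large : (2 * #|` A| ^ 3 <= energy 3 A)%N.
  rewrite -(ler_nat R) natrM natrX.
  have : 0 <= #|` A|%:R ^+ 3 :> R by rewrite exprn_ge0.
  have : 0 <= (energy 3 A)%:R :> R by [].
  nra.
have [B [BA nB light]] := exists_light_subset p n_gt0.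
have nBR : #|` A|%:R <= 2 * #|` B|%:R :> R by rewrite -natrM ler_nat.
have B_large : beta * #|` A|%:R <= #|` B|%:R by have : 0 <= #|` A|%:R :> R by []; nra.
have nR : 0 < #|` A|%:R :> R by rewrite ltr0n.
have := A_conn B BA B_large.
rewrite (energy_split BA) // natrD !natrX => /(connected_energy3_le nR nBR E3_large16).
move=> /(combine_energy_bounds nR) -> //.
- by rewrite ltr0n; apply: leq_trans E3_large; rewrite muln_gt0 expn_gt0 n_gt0.
- by rewrite -!natrX -!natrM ler_nat.
- by rewrite -!natrX -!natrM ler_nat energy2_le_maxpm_energy3.
Qed.

Theorem theorem9 :
  exists c1 c2 : rat, 0 < c1 /\ 0 < c2 /\
  forall (R : realFieldType) (G : zmodType) (A : {fset G}),
    ((energy 3 A)%:R >= 2 * (#|` A|%:R) ^+ 3 :> R ->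
       forall plus : bool,
         ((maxpm plus A)%:R) ^+ 3 >=
           ratr c1 * (#|` A|%:R) ^+ 10 /
             ((#|` diffset A A|%:R) * ((energy 2 A)%:R) ^+ 2) :> R)
    /\
    (forall beta gamma : R,
       0 <= beta <= 1 -> 0 <= gamma <= 1 -> beta <= 1 / 2 ->
       connected 3 beta gamma A ->
       (energy 3 A)%:R >= 2 ^+ 4 / gamma * (#|` A|%:R) ^+ 3 ->
       forall plus : bool,
         ((maxpm plus A)%:R) ^+ 2 >=
           ratr c2 * gamma * (#|` A|%:R) ^+ 5 / (energy 2 A)%:R).
Proof.
exists (1 / 2), (1 / 512); split; first lra; split; first lra.
move=> R G A; split.
  move=> E3_large p; rewrite fmorph_div rmorph1 rmorph_nat.
  have E3_largeN : (2 * #|` A| ^ 3 <= energy 3 A)%N by rewrite -(ler_nat R) natrM natrX.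
  set X := #|` diffset A A|%:R * (energy 2 A)%:R ^+ 2 : R.
  have bound : #|` A|%:R ^+ 10 <= 2 * (maxpm p A)%:R ^+ 3 * X :> R.
    by rewrite /X -!natrX -!natrM ler_nat mulnA maxpm_cube_lower_bound.
  have X_ge0 : 0 <= X by rewrite mulr_ge0 ?exprn_ge0.
  have [->|X_neq0] := eqVneq X 0; first by rewrite invr0 mulr0 exprn_ge0.
  rewrite ler_pdivrMr ?lt_def ?X_neq0 //; clearbody X; lra.
move=> beta gamma _ /andP[g_ge0 g_le1] beta_le A_conn E3_large p.
rewrite fmorph_div rmorph1 rmorph_nat.
have [->|g_neq0] := eqVneq gamma 0; first by rewrite mulr0 !mul0r exprn_ge0.
have g_bounds : 0 < gamma <= 1 by rewrite lt_def g_neq0 g_ge0 g_le1.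
have E3_large16 : 16 * #|` A|%:R ^+ 3 <= gamma * (energy 3 A)%:R :> R.
  have -> : 16 * #|` A|%:R ^+ 3 = gamma * (2 ^+ 4 / gamma * #|` A|%:R ^+ 3) :> R.
    by field.
  by rewrite ler_wpM2l.
have [E0|E_neq0] := eqVneq (energy 2 A) 0%N.
  by rewrite E0 mulr0n invr0 mulr0 exprn_ge0.
have := maxpm_sqr_lower_bound p g_bounds beta_le A_conn E3_large16.
by rewrite ler_pdivrMr ?ltr0n ?lt0n //; lra.
Qed.
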